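(* (a) For $n\ge1$, the Schröder number $r_{n-1}$ equals the number of triples consisting of an integer $s\ge0$ together with integer sequences $i_1\ge i_2\ge\dots\ge i_s>0$ and $0<j_1\le j_2\le\dots\le j_s$ and a sequence $r_1,\dots,r_s\in\{0,1\}$ such that $i_1-r_1>i_2-r_2>\dots>i_s-r_s>0$, $0<j_1-r_1<j_2-r_2<\dots<j_s-r_s$, and $i_k+j_k\le n+r_k$ for all $k=1,\dots,s$. (b) For $n\ge1$, the Catalan number $C_n=\frac{1}{n+1}\binom{2n}{n}$ equals the number of pairs of integer sequences $i_1>i_2>\dots>i_s>0$ and $0<j_1<j_2<\dots<j_s$ (with $s\ge0$ arbitrary) such that $i_k+j_k\le n$ for all $k$. Moreover, for each $s\ge0$ the number of such pairs of sequences of length $s$ equals the Narayana number $N(n,s+1)=\frac1n\binom{n}{s}\binom{n}{s+1}$.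
   Context: The (large) Schröder numbers are defined by $r_0=1$ and $r_n=r_{n-1}+\sum_{i=0}^{n-1}r_ir_{n-1-i}$ for $n\ge1$. *)

From mathcomp Require Import all_boot all_order all_algebra.
Set Implicit Arguments. Unset Strict Implicit. Unset Printing Implicit Defensive.
Import GRing.Theory Num.Theory.

(* Large Schröder numbers: r_0 = 1, r_n = r_{n-1} + sum_{i=0}^{n-1} r_i r_{n-1-i}.
   schr_seq n = [:: r_0; ...; r_n]. *)
Fixpoint schr_seq (n : nat) : seq nat :=
  match n with
  | 0 => [:: 1]
  | m.+1 => let s := schr_seq m in
            rcons s (last 1 s + \sum_(i < m.+1) nth 0 s i * nth 0 s (m - i))
  end.

Definition schroder (n : nat) : nat := nth 0 (schr_seq n) n.

Lemma size_schr_seq n : size (schr_seq n) = n.+1.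
Proof. by elim: n => [|n IH] //=; rewrite size_rcons IH. Qed.

Lemma nth_schr_seq n k : k <= n -> nth 0 (schr_seq n) k = schroder k.
Proof.
elim: n => [|n IH]; first by rewrite leqn0 => /eqP->.
rewrite leq_eqVlt => /orP[/eqP->//|]; rewrite ltnS => kn /=.
by rewrite nth_rcons size_schr_seq ltnS kn IH.
Qed.

Lemma schroder0 : schroder 0 = 1.
Proof. by []. Qed.

Lemma schroderS n :
  schroder n.+1 = schroder n + \sum_(i < n.+1) schroder i * schroder (n - i).
Proof.
rewrite /schroder /= nth_rcons size_schr_seq ltnn eqxx.
rewrite (last_nth 0) size_schr_seq /=.
congr (_ + _); apply: eq_bigr => i _.
by rewrite !nth_schr_seq // ?leq_subr // -ltnS.
Qed.

Definition has_card (T : eqType) (P : T -> Prop) (c : nat) : Prop :=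
  exists L : seq T, [/\ uniq L, (forall x, P x <-> x \in L) & size L = c].

(* Part (a): a triple-sequence is a list [:: (i_1,j_1,r_1); ...; (i_s,j_s,r_s)]
   (encoded as ((i,j),r)); s is its length. *)
Definition schr_step (a b : nat * nat * nat) : bool :=
  [&& a.1.1 >= b.1.1, a.1.2 <= b.1.2,
      a.1.1 - a.2 > b.1.1 - b.2 & a.1.2 - a.2 < b.1.2 - b.2].

Definition schr_entry (n : nat) (a : nat * nat * nat) : bool :=
  [&& 0 < a.1.1, 0 < a.1.2, a.2 <= 1,
      0 < a.1.1 - a.2, 0 < a.1.2 - a.2 & a.1.1 + a.1.2 <= n + a.2].

Definition schr_config (n : nat) (t : seq (nat * nat * nat)) : Prop :=
  sorted schr_step t /\ all (schr_entry n) t.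

(* Part (b): a pair of sequences is a list [:: (i_1,j_1); ...; (i_s,j_s)]. *)
Definition cat_step (a b : nat * nat) : bool := (a.1 > b.1) && (a.2 < b.2).

Definition cat_entry (n : nat) (a : nat * nat) : bool :=
  [&& 0 < a.1, 0 < a.2 & a.1 + a.2 <= n].

Definition cat_config (n : nat) (t : seq (nat * nat)) : Prop :=
  sorted cat_step t /\ all (cat_entry n) t.

From mathcomp Require Import all_boot all_order all_algebra.
Import GRing.Theory Num.Theory.
From mathcomp Require Import zify ring lra.
Set Implicit Arguments. Unset Strict Implicit. Unset Printing Implicit Defensive.

(* Both parts count chains of a strict order.  In the coordinates
   (u, v) = (i - r, j - r) (r = 0 in part (b)) consecutive entries of a
   configuration have strictly smaller u and strictly larger v, and all entries
   lie in the triangle u, v > 0, u + v <= n.  Classify the chains inside the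
   quadrant {u < a, b < v} by their first element: the quadrants with corners
   (a+1, b), (a, b+1) and (a, b), (a+1, b+1) then differ only by the chains
   starting in the cell (a, b+1), which gives a local recurrence in a and b.
   A cell below the diagonal u + v = n holds one entry in part (b) but two
   (r = 0 and r = 1) in part (a); a diagonal cell holds one in both.  On
   trapezoids the recurrence is solved by the coefficients of x^p in R(x)^(d+1),
   R the Schroeder series, resp. by the binomial determinants
   C(p,s) C(q,s) - C(p,s+1) C(q,s-1); on the full triangle these are r_(n-1) and
   the Narayana numbers, which Vandermonde's identity sums to C_n. *)

Section Chains.
Variables (T : eqType) (step : rel T).
Hypotheses (step_trans : transitive step) (step_irr : irreflexive step).

(* A nonempty chain is its first element x followed by a chain in [step x].  As
   [step] is irreflexive the candidate list shrinks at each level, so fuel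
   [size S] suffices. *)
Fixpoint chains_fuel (f : nat) (S : seq T) : seq (seq T) :=
  if f is f'.+1 then
    [::] :: [seq x :: t | x <- S, t <- chains_fuel f' (filter (step x) S)]
  else [:: [::]].

Definition chains (S : seq T) : seq (seq T) := chains_fuel (size S) S.

Lemma ltn_size_filter_step x S : x \in S -> size (filter (step x) S) < size S.
Proof.
move=> xS; rewrite size_filter -(count_predC (step x) S) -addn1 leq_add2l.
by rewrite -has_count; apply/hasP; exists x => //=; rewrite step_irr.
Qed.

Lemma eq_chains_fuel f g S :
  size S <= f -> size S <= g -> chains_fuel f S = chains_fuel g S.
Proof.
elim: f g S => [|f IH] [|g] S //; rewrite ?leqn0 => Sf Sg.
- by rewrite (size0nil (eqP Sf)).
- by rewrite (size0nil (eqP Sg)).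
congr (_ :: flatten _); apply/eq_in_map => x xS; congr map.
by apply: IH; rewrite -ltnS (leq_trans (ltn_size_filter_step xS)).
Qed.

Lemma chainsE S :
  chains S = [::] :: [seq x :: t | x <- S, t <- chains (filter (step x) S)].
Proof.
rewrite {1}/chains; case: S => [//|y S]; rewrite [size _]/=; congr (_ :: flatten _).
apply/eq_in_map => x xS; congr map; apply: eq_chains_fuel => //.
by rewrite -ltnS (ltn_size_filter_step xS).
Qed.

Lemma mem_chains S t : (t \in chains S) = sorted step t && all (mem S) t.
Proof.
have [k ltSk] := ubnP (size S); elim: k S ltSk t => // k IH S ltSk [|x t].
  by rewrite chainsE mem_head.
rewrite chainsE in_cons /= (path_sortedE step_trans).
apply/allpairsPdep/idP => [[y [t' [yS t'S [-> ->]]]] | ].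
  move: t'S; rewrite IH; last exact: leq_trans (ltn_size_filter_step yS) _.
  case/andP=> -> /allP above; rewrite yS andbT /=.
  by apply/andP; split; apply/allP => z /above /=; rewrite mem_filter => /andP[].
case/andP=> /andP[above sorted_t] /andP[xS inS]; exists x, t; split=> //.
rewrite IH ?sorted_t /=; last exact: leq_trans (ltn_size_filter_step xS) _.
by apply/allP => z zt /=; rewrite mem_filter (allP above) //=; apply: (allP inS).
Qed.

Lemma uniq_chains S : uniq S -> uniq (chains S).
Proof.
have [k ltSk] := ubnP (size S); elim: k S ltSk => // k IH S ltSk uS.
rewrite chainsE /= allpairs_uniq_dep // ?andbT.
- by apply/allpairsPdep => -[x [t []]].
- move=> x xS; apply: IH; last exact: filter_uniq.
  exact: leq_trans (ltn_size_filter_step xS) _.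
by move=> [x t] [y t'] _ _ /= [-> ->].
Qed.

Lemma count_chains (p : pred (seq T)) S :
  count p (chains S) =
  p [::] + \sum_(x <- S) count (preim (cons x) p) (chains (filter (step x) S)).
Proof.
rewrite chainsE /= count_flatten sumnE !big_map; congr (_ + _).
by apply: eq_bigr => x _; rewrite count_map.
Qed.

Lemma size_mem_chains S t : uniq S -> t \in chains S -> size t <= size S.
Proof.
move=> uS; rewrite mem_chains => /andP[st /allP tS].
exact: uniq_leq_size (sorted_uniq step_trans step_irr st) tS.
Qed.

End Chains.

Lemma size_sum_count_size (T : eqType) (L : seq (seq T)) K :
  {in L, forall t, size t < K} -> size L = \sum_(s < K) count (fun t => size t == s) L.
Proof.
elim: L => [|t L IH] size_lt; first by rewrite big1.
rewrite big_split /= -IH => [|u uL]; last by apply: size_lt; rewrite inE uL orbT.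
have lt_tK : size t < K by apply: size_lt; rewrite mem_head.
rewrite (bigD1 (Ordinal lt_tK)) //= eqxx big1 // => s ne_s.
by apply/eqP; rewrite eqb0; apply: contra ne_s => /eqP eq_s; apply/eqP/val_inj.
Qed.

Section Regions.
Variables (T : eqType) (step : rel T) (E : seq T) (u v : T -> nat) (n : nat).
Hypothesis step_irr : irreflexive step.
Hypothesis step_coord : {in E &, forall x y, step x y = (u y < u x) && (v x < v y)}.
Hypothesis coord_triangle : {in E, forall x, [&& 0 < u x, 0 < v x & u x + v x <= n]}.

Definition region a b := [seq x <- E | (u x < a) && (b < v x)].

Lemma filter_step_region a b x :
  x \in region a b -> filter (step x) (region a b) = region (u x) (v x).
Proof.
rewrite mem_filter => /andP[/andP[ua bv] xE].
rewrite -filter_predI; apply: eq_in_filter => y yE /=.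
by rewrite step_coord //; case: ltnP => //= uy; case: ltnP => //= vy; lia.
Qed.

Lemma region1 b : region 1 b = [::].
Proof.
rewrite /region (eq_in_filter (a2 := pred0)) ?filter_pred0 // => x /coord_triangle.
by rewrite /=; lia.
Qed.

Lemma region_full : region n 0 = E.
Proof.
rewrite /region (eq_in_filter (a2 := predT)) ?filter_predT // => x /coord_triangle.
by rewrite /=; lia.
Qed.

Lemma region_diag a b : a + b.+1 = n -> region a.+1 b.+1 = region a b.+1.
Proof.
move=> abn; apply: eq_in_filter => x /coord_triangle.
by case: ltnP => bv; rewrite ?andbF //=; lia.
Qed.

Variables (P Q : pred (seq T)).
Hypothesis P_cons : forall x t, P (x :: t) = Q t.

Lemma count_chains_region a b :
  count P (chains step (region a b)) =
  P [::] + \sum_(x <- E | (u x < a) && (b < v x))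
             count Q (chains step (region (u x) (v x))).
Proof.
rewrite count_chains // {1}/region big_filter big_seq_cond [X in _ = _ + X]big_seq_cond.
congr (_ + _); apply: eq_bigr => x /andP[xE uvx].
rewrite filter_step_region ?mem_filter ?uvx //.
by apply: eq_count => t; rewrite /= P_cons.
Qed.

(* Inclusion-exclusion of quadrants: the first elements counted on the two
   sides differ exactly by those in the cell (u, v) = (a, b+1). *)
Lemma count_chains_region_corner a b :
  count P (chains step (region a.+1 b)) + count P (chains step (region a b.+1)) =
  count P (chains step (region a b)) + count P (chains step (region a.+1 b.+1)) +
  count (fun x => (u x == a) && (v x == b.+1)) E *
    count Q (chains step (region a b.+1)).
Proof.
rewrite !count_chains_region addnACA [X in _ = X + _]addnACA -[RHS]addnA.
congr (_ + _); rewrite -sum1_count big_distrl !(big_mkcond (fun x => _ && _)).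
rewrite -!big_split; apply: eq_bigr => x _ /=.
have [/andP[/eqP-> /eqP->] | off_corner] := boolP ((u x == a) && (v x == b.+1)).
  by rewrite !ltnSn !ltnn /= mul1n addn0.
by do ![case: ifP => ?]; lia.
Qed.

End Regions.

(* The coefficient of x^p in R(x)^(d+1), R the Schroeder series
   ([schroder_trap_conv]), defined by the recurrence of [schr_region_card]. *)
Fixpoint schroder_trap (p : nat) : nat -> nat :=
  if p is p'.+1 then
    fix schroder_trapS d :=
      if d is d'.+1 then
        schroder_trapS d' + schroder_trap p' d'.+2 + schroder_trap p' d'.+1
      else schroder_trap p' 1 + schroder_trap p' 0
  else fun=> 1.

Arguments schroder_trap : simpl never.

Lemma schroder_trap0n d : schroder_trap 0 d = 1.
Proof. by []. Qed.

Lemma schroder_trapS0 p :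
  schroder_trap p.+1 0 = schroder_trap p 1 + schroder_trap p 0.
Proof. by []. Qed.

Lemma schroder_trapSS p d :
  schroder_trap p.+1 d.+1 =
  schroder_trap p.+1 d + schroder_trap p d.+2 + schroder_trap p d.+1.
Proof. by []. Qed.

Lemma schroder_trap_conv p d :
  schroder_trap p d.+1 = \sum_(k < p.+1) schroder_trap k 0 * schroder_trap (p - k) d.
Proof.
elim: p d => [|p IH] d; first by rewrite big_ord1.
rewrite big_ord_recr /= subnn schroder_trap0n muln1.
elim: d => [|d IHd].
  rewrite schroder_trapSS (IH 1) (IH 0) -addnA addnC; congr (_ + _).
  rewrite -big_split; apply: eq_bigr => k _ /=.
  by rewrite subSn ?schroder_trapS0 ?mulnDr // -ltnS.
have -> : \sum_(k < p.+1) schroder_trap k 0 * schroder_trap (p.+1 - k) d.+1 =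
  \sum_(k < p.+1) schroder_trap k 0 * schroder_trap (p.+1 - k) d
  + schroder_trap p d.+3 + schroder_trap p d.+2.
  rewrite (IH d.+2) (IH d.+1) -!big_split; apply: eq_bigr => k _ /=.
  by rewrite subSn ?schroder_trapSS ?mulnDr ?addnA // -ltnS.
by rewrite schroder_trapSS IHd [RHS]addnAC [X in _ = X + _]addnAC.
Qed.

Lemma schroder_trapn0 p : schroder_trap p 0 = schroder p.
Proof.
elim/ltn_ind: p => -[//|p] IH.
rewrite schroderS schroder_trapS0 schroder_trap_conv addnC IH //; congr (_ + _).
by apply: eq_bigr => k _; rewrite !IH // ltnS ?leq_subr.
Qed.

Section SchroderConfigurations.
Variable n : nat.

Definition schr_entries : seq (nat * nat * nat) :=
  filter (schr_entry n)
    [seq (x, r) | x <- [seq (i, j) | i <- iota 0 n.+1, j <- iota 0 n.+1], r <- iota 0 2].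

Definition schr_u (x : nat * nat * nat) : nat := x.1.1 - x.2.
Definition schr_v (x : nat * nat * nat) : nat := x.1.2 - x.2.

Lemma mem_schr_entries x : (x \in schr_entries) = schr_entry n x.
Proof.
case: x => [[i j] r]; rewrite mem_filter andb_idr // => entry.
rewrite /schr_entry /= in entry.
apply/allpairsP; exists ((i, j), r); split=> //; last by rewrite mem_iota /=; lia.
by apply/allpairsP; exists (i, j); rewrite !mem_iota; split=> //=; lia.
Qed.

Lemma uniq_schr_entries : uniq schr_entries.
Proof.
apply/filter_uniq/allpairs_uniq; rewrite ?iota_uniq //; last first.
  by move=> [? ?] [? ?] _ _ [-> ->].
by apply: allpairs_uniq; rewrite ?iota_uniq // => -[? ?] [? ?] _ _ [-> ->].
Qed.

Lemma schr_step_trans : transitive schr_step.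
Proof. by move=> [[? ?] ?] [[? ?] ?] [[? ?] ?]; rewrite /schr_step /=; lia. Qed.

Lemma schr_step_irr : irreflexive schr_step.
Proof. by move=> x; rewrite /schr_step ltnn !andbF. Qed.

Lemma schr_step_coord : {in schr_entries &, forall x y,
  schr_step x y = (schr_u y < schr_u x) && (schr_v x < schr_v y)}.
Proof.
move=> [[? ?] ?] [[? ?] ?].
by rewrite !mem_schr_entries /schr_entry /schr_step /schr_u /schr_v /=; lia.
Qed.

Lemma schr_coord_triangle : {in schr_entries, forall x,
  [&& 0 < schr_u x, 0 < schr_v x & schr_u x + schr_v x <= n]}.
Proof.
by move=> [[? ?] ?]; rewrite mem_schr_entries /schr_entry /schr_u /schr_v /=; lia.
Qed.

Lemma count_schr_cell a c :
  count (fun x => (schr_u x == a) && (schr_v x == c)) schr_entries =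
  schr_entry n (a, c, 0) + schr_entry n (a.+1, c.+1, 1).
Proof.
rewrite (eq_in_count (a2 := predU (pred1 (a, c, 0)) (pred1 (a.+1, c.+1, 1)))); last first.
  move=> [[i j] r]; rewrite mem_schr_entries /schr_entry /schr_u /schr_v /= !xpair_eqE.
  by case: r => [|[|r]] /=; lia.
have := count_predUI (pred1 (a, c, 0)) (pred1 (a.+1, c.+1, 1)) schr_entries.
rewrite (@eq_count _ (predI _ _) pred0) ?count_pred0 ?addn0 => [->|x /=]; last first.
  by case: eqP => // ->; rewrite !xpair_eqE andbF.
by rewrite !count_uniq_mem ?uniq_schr_entries // !mem_schr_entries.
Qed.

Definition schr_region_card a b : nat :=
  size (chains schr_step (region schr_entries schr_u schr_v a b)).

Lemma schr_region_card_corner a b :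
  schr_region_card a.+1 b + schr_region_card a b.+1 =
  schr_region_card a b + schr_region_card a.+1 b.+1 +
  (schr_entry n (a, b.+1, 0) + schr_entry n (a.+1, b.+2, 1)) * schr_region_card a b.+1.
Proof.
rewrite /schr_region_card -!count_predT -count_schr_cell.
exact: (count_chains_region_corner schr_step_irr schr_step_coord (P := predT)).
Qed.

Lemma schr_region_card_trap p b d :
  p.+1 + b + d = n -> schr_region_card p.+1 b = schroder_trap p d.
Proof.
elim: p b d => [|p IHp] b d pbd.
  by rewrite /schr_region_card (region1 schr_coord_triangle).
elim: d b pbd => [|d IHd] b pbd; have corner := schr_region_card_corner p.+1 b.
  have diag : schr_region_card p.+2 b.+1 = schr_region_card p.+1 b.+1.
    by rewrite /schr_region_card (region_diag schr_coord_triangle) //; lia.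
  have one_cell : schr_entry n (p.+1, b.+1, 0) + schr_entry n (p.+2, b.+2, 1) = 1.
    by rewrite /schr_entry /=; lia.
  rewrite diag one_cell in corner.
  move: (IHp b 1) (IHp b.+1 0); rewrite schroder_trapS0; lia.
have two_cells : schr_entry n (p.+1, b.+1, 0) + schr_entry n (p.+2, b.+2, 1) = 2.
  by rewrite /schr_entry /=; lia.
rewrite two_cells in corner.
move: (IHd b.+1) (IHp b.+1 d.+1) (IHp b d.+2); rewrite schroder_trapSS; lia.
Qed.

Lemma schr_config_card : 0 < n -> has_card (schr_config n) (schroder n.-1).
Proof.
move=> n_gt0; exists (chains schr_step schr_entries); split.
- exact: (uniq_chains schr_step_irr) uniq_schr_entries.
- move=> t; rewrite (mem_chains schr_step_trans schr_step_irr).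
  rewrite (eq_all (a2 := schr_entry n)); last by move=> x; rewrite /= mem_schr_entries.
  by split=> [[-> ->] | /andP].
rewrite -(region_full schr_coord_triangle) -/(schr_region_card n 0) -schroder_trapn0.
by rewrite -[in LHS](prednK n_gt0) (schr_region_card_trap (d := 0)) // !addn0 prednK.
Qed.

End SchroderConfigurations.

Lemma sum_narayana m K : m < K ->
  \sum_(s < K) 'C(m.+1, s) * 'C(m.+1, s.+1) = 'C(m.+1 + m.+1, m).
Proof.
move=> lt_mK; rewrite -(subnKC lt_mK) big_split_ord /= [X in _ + X]big1 ?addn0.
  rewrite -binomial.Vandermonde; apply: eq_bigr => j _.
  by rewrite -subSS bin_sub.
by move=> i _; rewrite [X in _ * X]bin_small ?muln0 //; lia.
Qed.

Section NarayanaTrapezoid.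
Local Open Scope ring_scope.

(* C(p,s) C(q,s) - C(p,s+1) C(q,s-1), with s = 0 split off so that no
   truncated s - 1 occurs. *)
Definition narayana_trap (s p q : nat) : rat :=
  if s is s'.+1 then ('C(p, s) * 'C(q, s))%:R - ('C(p, s.+1) * 'C(q, s'))%:R else 1.

Lemma narayana_trapS0 s q : narayana_trap s.+1 0 q = 0.
Proof. by rewrite /narayana_trap !bin0n subrr. Qed.

Lemma narayana_trapSS s p q :
  narayana_trap s.+1 p.+1 q.+1 =
  narayana_trap s.+1 p q.+1 + narayana_trap s.+1 p.+1 q - narayana_trap s.+1 p q
  + narayana_trap s p q.
Proof.
by case: s => [|s]; rewrite /narayana_trap !binS ?bin0 !natrM !natrD; ring.
Qed.

Lemma narayana_trap_diag s p : narayana_trap s p.+1 p = narayana_trap s p p.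
Proof.
by case: s => [|s]; rewrite /narayana_trap ?binS ?bin0 ?natrM ?natrD; ring.
Qed.

Lemma narayana_trap_square s m :
  narayana_trap s m m * m.+1%:R = ('C(m.+1, s) * 'C(m.+1, s.+1))%:R.
Proof.
case: s => [|s]; first by rewrite /narayana_trap bin0 bin1 mul1r mul1n.
have [ms | sm] := ltnP m s.+1.
  by rewrite /narayana_trap (bin_small ms) (@bin_small m s.+2) ?(@bin_small m.+1 s.+2)
    ?mul0n ?muln0 ?subrr ?mul0r //; lia.
rewrite /narayana_trap !binS.
have [t ->] : exists t, m = (s.+1 + t)%N by exists (m - s.+1)%N; lia.
set x := 'C(_, s.+1); set y := 'C(_, s.+2); set z := 'C(_, s).
have up : (s.+2 * y = t * x)%N by rewrite mul_bin_left addKn.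
have down : (s.+1 * x = t.+1 * z)%N.
  by rewrite mul_bin_left (_ : s.+1 + t - s = t.+1)%N //; lia.
have s2_neq0 : s.+2%:R != 0 :> rat by rewrite pnatr_eq0.
have t1_neq0 : t.+1%:R != 0 :> rat by rewrite pnatr_eq0.
have y_def : y%:R = t%:R * x%:R / s.+2%:R :> rat.
  by rewrite -natrM -up natrM mulrC mulKf.
have z_def : z%:R = s.+1%:R * x%:R / t.+1%:R :> rat.
  by rewrite -natrM down natrM mulrC mulKf.
clearbody x y z; rewrite !natrM !natrD y_def z_def.
move: s2_neq0 t1_neq0; rewrite -!natr1 ?natrD -?natr1 => s2_neq0 t1_neq0.
by field; apply/andP.
Qed.

Lemma catalan_bin_pred m :
  'C(m.+1 + m.+1, m)%:R / m.+1%:R = 'C(2 * m.+1, m.+1)%:R / m.+2%:R :> rat.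
Proof.
have := mul_bin_left (m.+1 + m.+1) m.
rewrite (_ : m.+1 + m.+1 - m = m.+2)%N; last by lia.
rewrite mul2n -addnn => /(congr1 (fun k => k%:R : rat)); rewrite !natrM => bin_rel.
apply: (canLR (mulfK _)); first by rewrite pnatr_eq0.
by rewrite mulrAC [_ * m.+1%:R]mulrC bin_rel [m.+2%:R * _]mulrC mulfK ?pnatr_eq0.
Qed.

End NarayanaTrapezoid.

Section CatalanConfigurations.
Variable n : nat.

Definition cat_entries : seq (nat * nat) :=
  filter (cat_entry n) [seq (i, j) | i <- iota 0 n.+1, j <- iota 0 n.+1].

Lemma mem_cat_entries x : (x \in cat_entries) = cat_entry n x.
Proof.
case: x => i j; rewrite mem_filter andb_idr // => entry; rewrite /cat_entry /= in entry.
by apply/allpairsP; exists (i, j); rewrite !mem_iota; split=> //=; lia.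
Qed.

Lemma uniq_cat_entries : uniq cat_entries.
Proof.
by apply/filter_uniq/allpairs_uniq; rewrite ?iota_uniq // => -[? ?] [? ?] _ _ [-> ->].
Qed.

Lemma cat_step_trans : transitive cat_step.
Proof. by move=> y x z; rewrite /cat_step; lia. Qed.

Lemma cat_step_irr : irreflexive cat_step.
Proof. by move=> x; rewrite /cat_step ltnn. Qed.

Lemma cat_coord_triangle :
  {in cat_entries, forall x, [&& 0 < x.1, 0 < x.2 & x.1 + x.2 <= n]}.
Proof. by move=> x; rewrite mem_cat_entries. Qed.

Lemma count_cat_cell a c :
  count (fun x => (x.1 == a) && (x.2 == c)) cat_entries = cat_entry n (a, c).
Proof.
rewrite (@eq_count _ _ (pred1 (a, c))) => [|[i j]]; last by rewrite /= xpair_eqE.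
by rewrite count_uniq_mem ?uniq_cat_entries // mem_cat_entries.
Qed.

Definition cat_region_count s a b : nat :=
  count (fun t => size t == s) (chains cat_step (region cat_entries fst snd a b)).

Lemma cat_region_count_corner s a b :
  cat_region_count s.+1 a.+1 b + cat_region_count s.+1 a b.+1 =
  cat_region_count s.+1 a b + cat_region_count s.+1 a.+1 b.+1 +
  cat_entry n (a, b.+1) * cat_region_count s a b.+1.
Proof.
rewrite -count_cat_cell.
exact: (count_chains_region_corner cat_step_irr (_ : {in cat_entries &, _})
          (P := fun t => size t == s.+1)).
Qed.

Lemma cat_region_count_diag s a b :
  a + b.+1 = n -> cat_region_count s a.+1 b.+1 = cat_region_count s a b.+1.
Proof. by move=> abn; rewrite /cat_region_count (region_diag cat_coord_triangle). Qed.

Lemma cat_region_count0 a b : cat_region_count 0 a b = 1.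
Proof.
rewrite /cat_region_count count_chains ?big1 // => [x _|]; last exact: cat_step_irr.
by apply/eqP; rewrite -leqn0 leqNgt -has_count; apply/hasPn.
Qed.

Local Open Scope ring_scope.

Lemma cat_region_count_trap s p b d : (p.+1 + b + d)%N = n ->
  (cat_region_count s p.+1 b)%:R = narayana_trap s p (p + d).
Proof.
elim: s p b d => [|s IHs] p b d pbd; first by rewrite cat_region_count0.
elim: p b d pbd => [|p IHp] b d pbd.
  by rewrite /cat_region_count (region1 cat_coord_triangle) narayana_trapS0.
have corner b' : (p.+2 + b' <= n)%N ->
    (cat_region_count s.+1 p.+2 b')%:R =
    (cat_region_count s.+1 p.+1 b')%:R + (cat_region_count s.+1 p.+2 b'.+1)%:R
    - (cat_region_count s.+1 p.+1 b'.+1)%:R + (cat_region_count s p.+1 b'.+1)%:R :> rat.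
  move=> le_n; have := cat_region_count_corner s p.+1 b'.
  rewrite (_ : cat_entry n (p.+1, b'.+1) = true) ?mul1n; last first.
    by rewrite /cat_entry /=; lia.
  by move/(congr1 (fun k => k%:R : rat)); rewrite !natrD; lra.
elim: d b pbd => [|d IHd] b pbd; rewrite corner; try lia.
  rewrite cat_region_count_diag ?(IHp b 1%N) ?(IHs p b.+1 0%N); try lia.
  by rewrite !addn0 addn1 narayana_trapSS narayana_trap_diag; ring.
rewrite (IHd b.+1) ?(IHp b.+1 d.+1) ?(IHp b d.+2) ?(IHs p b.+1 d.+1); try lia.
by rewrite addSnnS addSn narayana_trapSS -addnS; ring.
Qed.

Lemma mem_chains_cat_entries t : cat_config n t <-> t \in chains cat_step cat_entries.
Proof.
rewrite (mem_chains cat_step_trans cat_step_irr).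
rewrite (eq_all (a2 := cat_entry n)); last by move=> x; rewrite /= mem_cat_entries.
by split=> [[-> ->] | /andP].
Qed.

Lemma count_size_chains_cat_entries s : (0 < n)%N ->
  (count (fun t => size t == s) (chains cat_step cat_entries))%:R =
  ('C(n, s) * 'C(n, s.+1))%:R / n%:R :> rat.
Proof.
move=> n_gt0; rewrite -(region_full cat_coord_triangle) -/(cat_region_count s n 0).
rewrite -[in LHS](prednK n_gt0) (@cat_region_count_trap s _ 0 0) ?addn0 ?prednK //.
by rewrite -[n in RHS](prednK n_gt0) -narayana_trap_square mulfK ?pnatr_eq0.
Qed.

Lemma narayana_config_card s : (0 < n)%N -> exists c : nat,
  has_card (fun t => cat_config n t /\ size t = s) c
  /\ (c%:R : rat) = ('C(n, s) * 'C(n, s.+1))%:R / n%:R.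
Proof.
move=> n_gt0; exists (count (fun t => size t == s) (chains cat_step cat_entries)).
split; last exact: count_size_chains_cat_entries.
exists (filter (fun t => size t == s) (chains cat_step cat_entries)); split.
- exact/filter_uniq/(uniq_chains cat_step_irr)/uniq_cat_entries.
- move=> t; rewrite mem_filter; split=> [[/mem_chains_cat_entries -> ->] | ].
    by rewrite eqxx.
  by case/andP=> /eqP <- /mem_chains_cat_entries.
- by rewrite size_filter.
Qed.

Lemma catalan_config_card : (0 < n)%N -> exists c : nat,
  has_card (cat_config n) c /\ (c%:R : rat) = 'C(2 * n, n)%:R / n.+1%:R.
Proof.
move=> n_gt0; exists (size (chains cat_step cat_entries)); split.
  exists (chains cat_step cat_entries); split=> //.
  - exact: (uniq_chains cat_step_irr) uniq_cat_entries.
  - exact: mem_chains_cat_entries.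
rewrite (@size_sum_count_size _ _ (n + size cat_entries)) => [|t].
  rewrite natr_sum.
  rewrite (eq_bigr _ (fun (s : 'I_ _) _ => count_size_chains_cat_entries s n_gt0)).
  rewrite -mulr_suml -natr_sum -(prednK n_gt0) sum_narayana ?catalan_bin_pred //.
  by rewrite prednK //; lia.
move/(size_mem_chains cat_step_trans cat_step_irr uniq_cat_entries) => le_tE.
by rewrite -(prednK n_gt0) addSn ltnS (leq_trans le_tE) ?leq_addl.
Qed.

End CatalanConfigurations.

Local Open Scope ring_scope.

Theorem corollary2p5 (n : nat) (hn : (1 <= n)%N) :
  has_card (schr_config n) (schroder n.-1)
  /\ (exists c : nat, has_card (cat_config n) c
        /\ (c%:R : rat) = ('C(2 * n, n))%:R / (n.+1)%:R)
  /\ (forall s : nat, exists c : nat,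
        has_card (fun t => cat_config n t /\ size t = s) c
        /\ (c%:R : rat) = ('C(n, s) * 'C(n, s.+1))%:R / n%:R).
Proof.
split; first exact: schr_config_card.
split; first exact: catalan_config_card.
by move=> s; apply: narayana_config_card.
Qed.
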